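(* Under the standing assumptions below, let $k\in P$ and $x\in M_k$, and let $p:M\to\bigoplus_{i\in P}M_{\langle i\rangle}$ be any graded $R[U_0]$-homomorphism with $q\circ p=\mathrm{id}_M$. Then $x$ is decomposable (i.e. $x\in D_k$) if and only if $p(x)=\ell_1+\dots+\ell_r$ with $0\neq \ell_j\in M_{\langle s_j\rangle}$ and $s_j<k$ for all $j$ (that is, every nonzero component of $p(x)$ lies in a summand $M_{\langle s\rangle}$ with $s<k$).
   Context: Standing assumptions: $R$ is a principal ideal domain; $P$ is a lattice with a compatible abelian group structure ($(P,+,0)$ abelian group, $a\le b\Rightarrow a+c\le b+c$). $U_0=\{s\in P:s\ge 0\}$, $R[U_0]$ the monoid ring (finite sums $\sum c_st^s$, $c_s\in R$), graded by $\deg(ct^s)=s$. $M=\bigoplus_{a\in P}M_a$ is a $P$-graded $R[U_0]$-module that is graded projective, with each $M_a$ a finitely generated (hence free) $R$-module. For $r\in P$, $D_r=\sum_{q<r}t^{\,r-q}M_q\subseteq M_r$; $x\in M_r$ is decomposable if $x\in D_r$. For each $i\in P$, fix an $R$-basis $\{m_j\}$ of $M_i$ and let $M_{\langle i\rangle}$ be the graded free $R[U_0]$-module with homogeneous basis $\{\widetilde m_j\}$, all of degree $i$. Let $q:\bigoplus_{i\in P}M_{\langle i\rangle}\to M$ be the graded homomorphism whose restriction to $M_{\langle i\rangle}$ sends $t^{s}\sum_j c_j\widetilde m_j\mapsto t^s\sum_jc_jm_j$ ($c_j\in R$); $q$ is surjective, so by projectivity there is a graded homomorphism $p$ with $q\circ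 p=\mathrm{id}_M$. All homomorphisms are degree-preserving. *)

From HB Require Import structures.
From mathcomp Require Import all_boot all_order all_algebra.

Set Implicit Arguments.
Unset Strict Implicit.
Unset Printing Implicit Defensive.

Import Order.TTheory GRing.Theory Num.Theory.
Local Open Scope ring_scope.

Definition is_ideal (R : comRingType) (I : R -> Prop) : Prop :=
  [/\ I 0, (forall x y, I x -> I y -> I (x + y)) &
      (forall r x, I x -> I (r * x))].

Definition is_PID (R : idomainType) : Prop :=
  forall I : R -> Prop, is_ideal I ->
    exists a : R, forall x, I x <-> exists r, x = r * a.

Definition lattice_ordered_group (P : porderZmodType) : Prop :=
  [/\ (forall a b c : P, a <= b -> a + c <= b + c),
      (forall a b : P, exists j : P,
          [/\ a <= j, b <= j & forall z, a <= z -> b <= z -> j <= z]) &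
      (forall a b : P, exists m : P,
          [/\ m <= a, m <= b & forall z, z <= a -> z <= b -> z <= m])].

(* P-graded R[U_0]-modules.  A P-graded R[U_0]-module M = (+)_a M_a is *)
(* given by its homogeneous components M_a (R-modules) together with  *)
(* the action of the monomials: for a <= b, [tr a b] is the R-linear   *)
(* map M_a -> M_b, x |-> t^(b - a) x.  The axioms say t^0 = id and     *)
(* t^s t^s' = t^(s + s').  (tr a b is irrelevant when ~~ (a <= b).)    *)
Record gmod (R : idomainType) (P : porderZmodType) := GMod {
  gcomp : P -> lmodType R;
  tr : forall a b : P, {linear gcomp a -> gcomp b}
}.

Definition gmod_axioms (R : idomainType) (P : porderZmodType) (M : gmod R P) :=
  (forall a (x : gcomp M a), tr M a a x = x) /\
  (forall a b c (x : gcomp M a), a <= b -> b <= c ->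
      tr M b c (tr M a b x) = tr M a c x).

Definition is_ghom (R : idomainType) (P : porderZmodType) (A B : gmod R P)
  (f : forall a, {linear gcomp A a -> gcomp B a}) : Prop :=
  forall a b (x : gcomp A a), a <= b -> f b (tr A a b x) = tr B a b (f a x).

(* Graded projective: projective in the category of graded modules     *)
(* (surjective graded homomorphisms are the degreewise surjective ones) *)
Definition graded_projective (R : idomainType) (P : porderZmodType)
    (M : gmod R P) : Prop :=
  forall (A B : gmod R P) (g : forall a, {linear gcomp A a -> gcomp B a})
         (f : forall a, {linear gcomp M a -> gcomp B a}),
    gmod_axioms A -> gmod_axioms B -> is_ghom g -> is_ghom f ->
    (forall a (y : gcomp B a), exists x, g a x = y) ->
    exists h : forall a, {linear gcomp M a -> gcomp A a},
      is_ghom h /\ forall a (x : gcomp M a), g a (h a x) = f a x.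

Definition lincomb (R : idomainType) (V : lmodType R) n
    (e : 'I_n -> V) (c : 'rV[R]_n) : V :=
  \sum_(j < n) c 0 j *: e j.

Definition is_basis (R : idomainType) (V : lmodType R) n (e : 'I_n -> V) :=
  (forall c : 'rV[R]_n, lincomb e c = 0 -> c = 0) /\
  (forall v : V, exists c : 'rV[R]_n, lincomb e c = v).

(* The graded free module F = (+)_{i in P} M_<i>, where M_<i> is free  *)
(* on basis {m~_{i,j}}_{j < n i} in degree i.  A homogeneous element  *)
(* of F of degree a is uniquely  sum_i t^(a-i) sum_j c_{i,j} m~_{i,j}, *)
(* with finitely many i (all <= a) having nonzero coefficient row      *)
(* c_i : 'rV_(n i).  A graded homomorphism p : M -> F is thus given by *)
(* linear maps  p a i : M_a -> 'rV_(n i)  (the M_<i>-component of p on *)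
(* degree a), subject to the conditions below; multiplication by       *)
(* t^(b-a) on F does not change the coefficient rows.                  *)
Definition ghom_to_free (R : idomainType) (P : porderZmodType) (M : gmod R P)
    (n : P -> nat) (p : forall a i, {linear gcomp M a -> 'rV[R]_(n i)}) :=
  [/\
      (forall a (x : gcomp M a), exists s : seq P,
          forall i, p a i x != 0 -> i \in s),
      (* degree a part of M_<i> is zero unless i <= a *)
      (forall a i (x : gcomp M a), p a i x != 0 -> i <= a) &
      (forall a b i (x : gcomp M a), a <= b -> p b i (tr M a b x) = p a i x)].

(* q : F -> M, restricted to degree a, applied to the element with     *)
(* coefficient rows c, whose support is contained in the seq s.        *)
Definition qmap (R : idomainType) (P : porderZmodType) (M : gmod R P)
    (n : P -> nat) (bas : forall i, 'I_(n i) -> gcomp M i)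
    (a : P) (c : forall i, 'rV[R]_(n i)) (s : seq P) : gcomp M a :=
  \sum_(i <- s | i <= a) tr M i a (lincomb (bas i) (c i)).

Definition q_section (R : idomainType) (P : porderZmodType) (M : gmod R P)
    (n : P -> nat) (bas : forall i, 'I_(n i) -> gcomp M i)
    (p : forall a i, {linear gcomp M a -> 'rV[R]_(n i)}) :=
  forall a (x : gcomp M a) (s : seq P), uniq s ->
    (forall i, p a i x != 0 -> i \in s) ->
    qmap bas a (fun i => p a i x) s = x.

Definition decomposable (R : idomainType) (P : porderZmodType) (M : gmod R P)
    (r : P) (x : gcomp M r) : Prop :=
  exists zs : seq {q : P & gcomp M q},
    (forall z, z \in map (@projT1 _ _) zs -> z < r) /\
    x = \sum_(z <- zs) tr M (projT1 z) r (projT2 z).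

From HB Require Import structures.
From mathcomp Require Import all_boot all_order all_algebra.
Import Order.TTheory GRing.Theory Num.Theory.
Local Open Scope ring_scope.

(* A graded homomorphism into the free module cannot raise degrees, so the
   image of t^(k-q) M_q with q < k has all its components in degrees < k.
   Conversely, writing x = q (p x) and dropping the vanishing components,
   x is a sum of translates t^(k-s) of elements of degrees s < k. *)

Lemma lincomb0 (R : idomainType) (V : lmodType R) n (e : 'I_n -> V) :
  lincomb e 0 = 0.
Proof. by apply: big1 => j _; rewrite mxE scale0r. Qed.

Section DecomposableFreeSupport.

Context {R : idomainType} {P : porderZmodType} {M : gmod R P} {n : P -> nat}.
Context {p : forall a i, {linear gcomp M a -> 'rV[R]_(n i)}}.

Lemma decomposable_sum_lt k (s : seq P) (f : forall i, gcomp M i) :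
  decomposable (\sum_(i <- s | i < k) tr M i k (f i)).
Proof.
exists [seq existT (gcomp M) i (f i) | i <- [seq i <- s | i < k]]; split.
  move=> z /mapP[[q y] /mapP[i]]; rewrite mem_filter => /andP[ik _] -> ->.
  exact: ik.
by rewrite big_map big_filter.
Qed.

Section SupportBelow.

Hypothesis p_supp_le : forall a i (x : gcomp M a), p a i x != 0 -> i <= a.
Hypothesis p_tr :
  forall a b i (x : gcomp M a), a <= b -> p b i (tr M a b x) = p a i x.

Lemma ghom_free_tr_support_lt q k s (y : gcomp M q) :
  q < k -> p k s (tr M q k y) != 0 -> s < k.
Proof. by move=> qk; rewrite p_tr ?ltW // => /p_supp_le/le_lt_trans; apply. Qed.

Lemma decomposable_support_lt k (x : gcomp M k) :
  decomposable x -> forall s, p k s x != 0 -> s < k.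
Proof.
move=> [zs [zs_lt ->]] s; rewrite raddf_sum; apply: contraNT => s_nlt.
apply/eqP/big1_seq => -[q y] /andP[_ zs_qy] /=.
have qk : q < k := zs_lt q (map_f _ zs_qy).
by apply/eqP; move: s_nlt; apply: contraNT; apply: ghom_free_tr_support_lt.
Qed.

End SupportBelow.

Context {bas : forall i, 'I_(n i) -> gcomp M i}.

Lemma qmap_support_lt a (c : forall i, 'rV[R]_(n i)) s :
  (forall i, c i != 0 -> i < a) ->
  qmap bas a c s = \sum_(i <- s | i < a) tr M i a (lincomb (bas i) (c i)).
Proof.
move=> c_lt; rewrite /qmap big_mkcond [RHS]big_mkcond; apply: eq_bigr => i _.
have [/eqP -> | /c_lt ia] := boolP (c i == 0); last by rewrite ia ltW.
by rewrite lincomb0 linear0; do 2!case: ifP.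
Qed.

Hypothesis p_fin :
  forall a (x : gcomp M a), exists s : seq P, forall i, p a i x != 0 -> i \in s.
Hypothesis q_p : q_section bas p.

Lemma support_lt_decomposable k (x : gcomp M k) :
  (forall s, p k s x != 0 -> s < k) -> decomposable x.
Proof.
move=> x_lt; have [s s_supp] := p_fin k x.
have undup_supp i : p k i x != 0 -> i \in undup s by rewrite mem_undup; apply: s_supp.
rewrite -(q_p k x (undup s) (undup_uniq s) undup_supp) qmap_support_lt //.
exact: decomposable_sum_lt.
Qed.

End DecomposableFreeSupport.

Theorem lemma4p3 (R : idomainType) (P : porderZmodType) (M : gmod R P)
    (n : P -> nat) (bas : forall i, 'I_(n i) -> gcomp M i)
    (p : forall a i, {linear gcomp M a -> 'rV[R]_(n i)}) :
  is_PID R ->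
  lattice_ordered_group P ->
  gmod_axioms M ->
  graded_projective M ->
  (forall i, is_basis (bas i)) ->
  ghom_to_free p ->
  q_section bas p ->
  forall (k : P) (x : gcomp M k),
    decomposable x <-> (forall s : P, p k s x != 0 -> s < k).
Proof.
move=> _ _ _ _ _ [p_fin p_supp_le p_tr] q_p k x; split.
  exact: (decomposable_support_lt p_supp_le p_tr).
exact: (support_lt_decomposable p_fin q_p).
Qed.
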